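(* Let $X$ be an affine Poisson variety over $\mathbf{k}$ with $\operatorname{HP}_0(\mathcal{O}(X))$ finite-dimensional, let $A_\hbar$ be a deformation quantization of $X$, and let $V\subseteq\mathcal{O}(X)$ be a finite-dimensional subspace such that the composition $V\hookrightarrow\mathcal{O}(X)\twoheadrightarrow\operatorname{HP}_0(\mathcal{O}(X))$ is an isomorphism. Then, inside $A_\hbar[\hbar^{-1}]$, $$A_\hbar\subseteq V[[\hbar]]+\hbar^{-1}\overline{[A_\hbar,A_\hbar]},$$ where $V[[\hbar]]=\{\sum_{m\ge0}v_m\hbar^m: v_m\in V\}\subseteq A_\hbar$ and $\overline{[A_\hbar,A_\hbar]}=\{\sum_{m\ge0}\hbar^mc_m: c_m\in[A_\hbar,A_\hbar]\}$ is the $\hbar$-adic closure of the span of commutators.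
   Context: A deformation quantization of $X$ is an associative $\mathbf{k}[[\hbar]]$-algebra $A_\hbar=(\mathcal{O}(X)[[\hbar]],\star)$ with $\star$ $\mathbf{k}[[\hbar]]$-bilinear, $a\star b\equiv ab\pmod\hbar$, and $a\star b-b\star a\equiv\hbar\{a,b\}\pmod{\hbar^2}$. $\operatorname{HP}_0(\mathcal{O}(X))=\mathcal{O}(X)/\{\mathcal{O}(X),\mathcal{O}(X)\}$. $\mathbf{k}$ is algebraically closed of characteristic zero. *)

From HB Require Import structures.
From mathcomp Require Import all_boot all_order all_algebra.
Set Implicit Arguments. Unset Strict Implicit. Unset Printing Implicit Defensive.
Import GRing.Theory.
Local Open Scope ring_scope.

Section Defs.
Variables (k : fieldType) (O : comAlgType k).

Inductive in_gen_alg (s : seq O) : O -> Prop :=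
| ga_gen x : x \in s -> in_gen_alg s x
| ga_one : in_gen_alg s 1
| ga_add x y : in_gen_alg s x -> in_gen_alg s y -> in_gen_alg s (x + y)
| ga_scale (c : k) x : in_gen_alg s x -> in_gen_alg s (c *: x)
| ga_mul x y : in_gen_alg s x -> in_gen_alg s y -> in_gen_alg s (x * y).

Definition affine_coordinate_ring : Prop :=
  (exists s : seq O, forall x : O, in_gen_alg s x) /\
  (forall (x : O) (n : nat), x ^+ n = 0 -> x = 0).

Record is_poisson_bracket (br : O -> O -> O) : Prop := {
  pb_linl : forall (c : k) x y z, br (c *: x + y) z = c *: br x z + br y z;
  pb_linr : forall (c : k) x y z, br x (c *: y + z) = c *: br x y + br x z;
  pb_anti : forall x y, br x y = - br y x;
  pb_jacobi : forall x y z, br x (br y z) + br y (br z x) + br z (br x y) = 0;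
  pb_leibniz : forall x y z, br x (y * z) = br x y * z + y * br x z
}.

(* {O,O} : the k-span of the brackets (finite sums of brackets suffice,
   since the bracket is bilinear) *)
Definition bracket_span (br : O -> O -> O) (x : O) : Prop :=
  exists l : seq (O * O), x = \sum_(p <- l) br p.1 p.2.

(* HP_0(O) = O / {O,O} is finite-dimensional *)
Definition HP0_finite_dim (br : O -> O -> O) : Prop :=
  exists s : seq O, forall x : O, exists (c : nat -> k) (b : O),
    bracket_span br b /\ x = \sum_(i < size s) c i *: s`_i + b.

Definition subspace (V : O -> Prop) : Prop :=
  V 0 /\ (forall (c : k) x y, V x -> V y -> V (c *: x + y)).

Definition finite_dim_subspace (V : O -> Prop) : Prop :=
  subspace V /\ exists s : seq O, (forall i, (i < size s)%N -> V s`_i) /\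
    forall x, V x -> exists c : nat -> k, x = \sum_(i < size s) c i *: s`_i.

(* V -> O -> HP_0(O) is an isomorphism: surjective and injective *)
Definition maps_iso_to_HP0 (br : O -> O -> O) (V : O -> Prop) : Prop :=
  (forall x : O, exists v b, V v /\ bracket_span br b /\ x = v + b) /\
  (forall v, V v -> bracket_span br v -> v = 0).

(* O[[h]] as coefficient sequences; k[[h]] likewise *)
Definition fps := nat -> O.
Definition kfps := nat -> k.

Definition fps_add (a b : fps) : fps := fun n => a n + b n.
Definition fps_opp (a : fps) : fps := fun n => - a n.
Definition fps_scale (c : kfps) (a : fps) : fps :=
  fun n => \sum_(i < n.+1) c i *: a (n - i)%N.
Definition fps_mul (a b : fps) : fps :=
  fun n => \sum_(i < n.+1) a i * b (n - i)%N.
Definition fps_br (br : O -> O -> O) (a b : fps) : fps :=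
  fun n => \sum_(i < n.+1) br (a i) (b (n - i)%N).
Definition hmul (a : fps) : fps := fun n => if n is m.+1 then a m else 0.

(* deformation quantization: an associative k[[h]]-bilinear product on
   O[[h]] with a*b = ab mod h and a*b - b*a = h{a,b} mod h^2 *)
Record is_deformation_quantization (br : O -> O -> O)
    (star : fps -> fps -> fps) : Prop := {
  dq_addl : forall a b c, star (fps_add a b) c = fps_add (star a c) (star b c);
  dq_addr : forall a b c, star a (fps_add b c) = fps_add (star a b) (star a c);
  dq_scalel : forall (c : kfps) a b, star (fps_scale c a) b = fps_scale c (star a b);
  dq_scaler : forall (c : kfps) a b, star a (fps_scale c b) = fps_scale c (star a b);
  dq_assoc : forall a b c, star (star a b) c = star a (star b c);
  dq_class : forall a b, star a b 0%N = fps_mul a b 0%N;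
  dq_comm0 : forall a b, star a b 0%N - star b a 0%N = 0;
  dq_comm1 : forall a b, star a b 1%N - star b a 1%N = hmul (fps_br br a b) 1%N
}.

(* [A,A]: span of commutators (finite sums; scalars can be absorbed) *)
Definition commutator_span (star : fps -> fps -> fps) (x : fps) : Prop :=
  exists l : seq (fps * fps),
    x = fun n => \sum_(p <- l) (star p.1 p.2 n - star p.2 p.1 n).

(* h-adic closure: all sums  sum_m h^m c_m  with c_m in [A,A] *)
Definition commutator_closure (star : fps -> fps -> fps) (x : fps) : Prop :=
  exists c : nat -> fps, (forall m, commutator_span star (c m)) /\
    x = fun n => \sum_(m < n.+1) c m (n - m)%N.

Definition in_V_series (V : O -> Prop) (v : fps) : Prop := forall n, V (v n).

End Defs.

(* Write a_0 = v + sum {x_i, y_i} with v in V.  Since the star commutator of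
   constants vanishes mod h and equals h {x, y} mod h^2, the element
   c := sum [x_i, y_i] of [A, A] satisfies h a = h v + c + h^2 a' for some a'.
   Iterating on the remainder a' and collecting terms gives
   h a = h (sum_m h^m v_m) + sum_m h^m c_m. *)
From HB Require Import structures.
From mathcomp Require Import all_boot all_order all_algebra.
From Stdlib Require Import ClassicalEpsilon FunctionalExtensionality.
Set Implicit Arguments. Unset Strict Implicit.
Import GRing.Theory.
Local Open Scope ring_scope.

Section PowerSeries.
Variables (k : fieldType) (O : comAlgType k).

Definition fps_const (x : O) : fps O := fun n => if n is 0%N then x else 0.

Variables (head : fps O -> O) (corr next : fps O -> fps O).
Hypothesis hmul_divide : forall r : fps O,
  hmul r = fps_add (fps_add (hmul (fps_const (head r))) (corr r))
                   (hmul (hmul (next r))).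

Lemma hmul_expansion (a : fps O) :
  hmul a = fps_add (hmul (fun j => head (iter j next a)))
                   (fun n => \sum_(m < n.+1) corr (iter m next a) (n - m)%N).
Proof.
apply: functional_extensionality => n; elim: n a => [|n IH] a.
  by rewrite hmul_divide /fps_add big_ord1 /= !add0r addr0.
rewrite {1}hmul_divide /fps_add /= IH /fps_add [in RHS]big_ord_recl subn0.
under eq_bigr => i _ do rewrite -iterSr.
under [in RHS]eq_bigr => i _ do rewrite lift0 subSS.
case: n {IH} => [|n] /=; first by rewrite add0r addrA.
by rewrite add0r -iterSr addrCA.
Qed.

End PowerSeries.

Section Quantization.
Variables (k : fieldType) (O : comAlgType k) (br : O -> O -> O)
  (star : fps O -> fps O -> fps O) (hDQ : is_deformation_quantization br star).

Lemma bracket_span_lift (x : O) : bracket_span br x ->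
  exists c : fps O, [/\ commutator_span star c, c 0%N = 0 & c 1%N = x].
Proof.
case=> l ->.
exists (fun n => \sum_(p <- l) (star (fps_const p.1) (fps_const p.2) n
                               - star (fps_const p.2) (fps_const p.1) n)).
split.
- by exists [seq (fps_const p.1, fps_const p.2) | p <- l];
    apply: functional_extensionality => n; rewrite big_map.
- by rewrite big1 // => p _; rewrite (dq_comm0 hDQ).
- by apply: eq_bigr => p _; rewrite (dq_comm1 hDQ) /= /fps_br big_ord1.
Qed.

Variables (V : O -> Prop) (hVHP : maps_iso_to_HP0 br V).

Lemma hmul_divide_mod_commutators (r : fps O) :
  exists v c r', [/\ V v, commutator_span star c &
    hmul r = fps_add (fps_add (hmul (fps_const v)) c) (hmul (hmul r'))].
Proof.
have [v [b [Vv [spanb r0E]]]] := hVHP.1 (r 0%N).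
have [c [spanc c0 c1]] := bracket_span_lift spanb.
exists v, c, (fun i => r i.+1 - c i.+2); split => //.
apply: functional_extensionality => -[|[|n]]; rewrite /fps_add /=.
- by rewrite c0 !addr0.
- by rewrite c1 r0E addr0.
- by rewrite add0r addrC subrK.
Qed.

End Quantization.

Theorem mainTheorem4 (k : closedFieldType) (hk : [pchar k] =i pred0)
  (O : comAlgType k) (br : O -> O -> O)
  (hX : affine_coordinate_ring O) (hbr : is_poisson_bracket br)
  (hHP : HP0_finite_dim br)
  (star : fps O -> fps O -> fps O) (hDQ : is_deformation_quantization br star)
  (V : O -> Prop) (hV : finite_dim_subspace V) (hVHP : maps_iso_to_HP0 br V) :
  forall a : fps O, exists v c : fps O,
    in_V_series V v /\ commutator_closure star c /\
    hmul a = fps_add (hmul v) c.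
Proof.
have [head headP] := choice _ (hmul_divide_mod_commutators hDQ hVHP).
have [corr corrP] := choice _ headP.
have [next nextP] := choice _ corrP.
move=> a.
exists (fun j => head (iter j next a)).
exists (fun n => \sum_(m < n.+1) corr (iter m next a) (n - m)%N).
split; first by move=> j; have [] := nextP (iter j next a).
split; last by apply: hmul_expansion => r; have [] := nextP r.
exists (fun m => corr (iter m next a)); split => // m.
by have [] := nextP (iter m next a).
Qed.
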